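(* Assume the sparsity setting below with $1<p\le2$. Let $(c^\ast,s^\ast)\in X\times Y$, $u^\ast=B(c^\ast,s^\ast)$, let $c^\ast$ be a $\Phi_p$-minimizing solution, and let $u_\delta\in Z$, $s_{\mathrm{mod},\epsilon}\in Y$ with $\|u^\ast-u_\delta\|\le\delta$, $\|s^\ast-s_{\mathrm{mod},\epsilon}\|\le\epsilon$. Assume the source condition: there is $\omega\in Z$ with $(\xi_{c^\ast},\xi_{s^\ast})=B'(c^\ast,s^\ast)^\ast\omega$ for some $(\xi_{c^\ast},\xi_{s^\ast})=:\xi^\ast\in\partial\tilde{\mathcal{R}}(c^\ast,s^\ast)$, where $B'(c^\ast,s^\ast)(x,y)=B(c^\ast,y)+B(x,s^\ast)$; and the smallness condition $C\|\omega\|<\min\{1,\gamma/(2\alpha_{\max})\}$ for some $0<\alpha_{\max}<\infty$. For $0<\alpha\le\alpha_{\max}$ let $(c^\alpha,s^\alpha)$ be a minimizer of $J^{u_\delta,s_{\mathrm{mod},\epsilon}}_{\alpha,\nu_1\alpha,\nu_2\alpha}$. If $\alpha\sim\delta+\epsilon$ (i.e., $m(\delta+\epsilon)\le\alpha\le M(\delta+\epsilon)$ for constants $0<m\le M$), then as $\delta+\epsilon\to0$ $$\|B(c^\alpha,s^\alpha)-B(c^\ast,s^\ast)\|=\mathcal{O}(\delta+\epsilon),\qquad D^{\xi^\ast}_{\tilde{\mathcal{R}}}((c^\alpha,s^\alpha),(c^\ast,s^\ast))=\mathcal{O}(\delta+\epsilon).$$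
   Context: Sparsity setting: $X,Y,Z$ are Hilbert spaces; $X\times Y$ carries the inner product $\langle (c_1,s_1),(c_2,s_2)\rangle=\langle c_1,c_2\rangle_X+\langle s_1,s_2\rangle_Y$. $B:X\times Y\to Z$ is bilinear, satisfies $\|B(c,s)\|_Z\le C\|c\|_X\|s\|_Y$ for some $C>0$, and is sequentially weak-weak continuous. $Y_n\subset Y$ is a finite-dimensional subspace, $P:Y\to Y_n$ is linear and bounded, $s_{\mathrm{calib}}\in Y_n$. $\mathcal{R}_s:Y\to[0,\infty)$ is proper, convex and weakly lower semi-continuous. $\{\varphi_i\}_{i\in\mathbb{N}}$ is an orthonormal basis of $X$, weights satisfy $1\le w_i<\infty$, and $\Phi_p(c)=\sum_iw_i|\langle c,\varphi_i\rangle|^p$. Fix $\gamma>0$ and $\nu_1,\nu_2\in(0,\infty)$. For $u\in Z$, $s_m\in Y$, $\alpha,\beta,\mu>0$: $J^{u,s_m}_{\alpha,\beta,\mu}(c,s)=\frac12\|B(c,s)-u\|^2+\frac{\gamma}{2}\|s-s_m\|^2+\frac{\mu}{2}\|P(s)-s_{\mathrm{calib}}\|^2+\alpha\Phi_p(c)+\beta\mathcal{R}_s(s)$, and $\tilde{\mathcal{R}}(c,s)=\Phi_p(c)+\frac{\nu_2}{2}\|P(s)-s_{\mathrm{calib}}\|^2+\nu_1\mathcal{R}_s(s)$ (so $J^{u,s_m}_{\alpha,\nu_1\alpha,\nu_2\alpha}=\frac12\|B(c,s)-u\|^2+\frac\gamma2\|s-s_m\|^2+\alpha\tilde{\mathcal{R}}$).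 $c^\ast$ is a $\Phi_p$-minimizing solution if $c^\ast\in\arg\min\{\Phi_p(c):B(c,s^\ast)=u^\ast\}$. For a convex functional $\mathcal{R}$ and $\xi\in\partial\mathcal{R}(x^\ast)$, $D^{\xi}_{\mathcal{R}}(x,x^\ast)=\mathcal{R}(x)-\mathcal{R}(x^\ast)-\langle\xi,x-x^\ast\rangle$. *)

From HB Require Import structures.
From mathcomp Require Import all_boot all_order all_algebra.
From mathcomp Require Import all_classical all_reals all_analysis.
Set Implicit Arguments. Unset Strict Implicit. Unset Printing Implicit Defensive.
Import Order.TTheory GRing.Theory Num.Theory.
Import numFieldNormedType.Exports.
Local Open Scope classical_set_scope.
Local Open Scope ring_scope.

Section Defs.
Variable R : realType.

(* A real Hilbert space: a complete normed space whose norm comes from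
   the inner product [ip] (symmetric, linear in the first argument). *)
Definition is_inner_product (X : completeNormedModType R) (ip : X -> X -> R) : Prop :=
  [/\ (forall x y, ip x y = ip y x),
      (forall (a : R) x y z, ip (a *: x + y) z = a * ip x z + ip y z)
    & (forall x, ip x x = `|x| ^+ 2)].

Definition weak_cvg (X : completeNormedModType R) (ip : X -> X -> R)
    (x : nat -> X) (l : X) : Prop :=
  forall v : X, (fun n => ip (x n) v) @ \oo --> ip l v.

Definition bilinear_map (X Y Z : completeNormedModType R) (B : X -> Y -> Z) : Prop :=
  (forall (a : R) c1 c2 s, B (a *: c1 + c2) s = a *: B c1 s + B c2 s) /\
  (forall (a : R) c s1 s2, B c (a *: s1 + s2) = a *: B c s1 + B c s2).

(* sequentially weak-weak continuous, weak convergence in X x Y being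
   componentwise weak convergence (for the product inner product) *)
Definition seq_weak_weak_continuous (X Y Z : completeNormedModType R)
    (ipX : X -> X -> R) (ipY : Y -> Y -> R) (ipZ : Z -> Z -> R)
    (B : X -> Y -> Z) : Prop :=
  forall (c : nat -> X) (s : nat -> Y) (c0 : X) (s0 : Y),
    weak_cvg ipX c c0 -> weak_cvg ipY s s0 ->
    weak_cvg ipZ (fun n => B (c n) (s n)) (B c0 s0).

Definition findim_subspace (Y : completeNormedModType R) (Yn : set Y) : Prop :=
  exists (n : nat) (e : 'I_n -> Y),
    Yn = [set y | exists a : 'I_n -> R, y = \sum_(i < n) a i *: e i].

Definition linear_map (Y : completeNormedModType R) (P : Y -> Y) : Prop :=
  forall (a : R) x y, P (a *: x + y) = a *: P x + P y.

Definition bounded_map (Y : completeNormedModType R) (P : Y -> Y) : Prop :=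
  exists K : R, forall y, `|P y| <= K * `|y|.

Definition convex_fun (Y : completeNormedModType R) (f : Y -> R) : Prop :=
  forall (t : R) x y, 0 <= t <= 1 ->
    f (t *: x + (1 - t) *: y) <= t * f x + (1 - t) * f y.

Definition weakly_lsc (Y : completeNormedModType R) (ipY : Y -> Y -> R)
    (f : Y -> R) : Prop :=
  forall (y : nat -> Y) (y0 : Y), weak_cvg ipY y y0 ->
    ((f y0)%:E <= limn_einf (fun n => (f (y n))%:E))%E.

Definition orthonormal_basis (X : completeNormedModType R) (ipX : X -> X -> R)
    (phi : nat -> X) : Prop :=
  (forall i j, ipX (phi i) (phi j) = (i == j)%:R) /\
  (forall x, (forall i, ipX x (phi i) = 0) -> x = 0).

Definition Phi_p (X : completeNormedModType R) (ipX : X -> X -> R)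
    (phi : nat -> X) (w : nat -> R) (p : R) (c : X) : \bar R :=
  (\sum_(0 <= i <oo) ((w i * (`|ipX c (phi i)| `^ p))%:E))%E.

Definition Jfun (X Y Z : completeNormedModType R) (ipX : X -> X -> R)
    (B : X -> Y -> Z) (gamma : R) (P : Y -> Y) (scal : Y) (Rs : Y -> R)
    (phi : nat -> X) (w : nat -> R) (p : R)
    (u : Z) (sm : Y) (alpha beta mu : R) (c : X) (s : Y) : \bar R :=
  ((2^-1 * `|B c s - u| ^+ 2 + gamma / 2 * `|s - sm| ^+ 2
    + mu / 2 * `|P s - scal| ^+ 2 + beta * Rs s)%:E
   + alpha%:E * Phi_p ipX phi w p c)%E.

Definition Rtilde (X Y : completeNormedModType R) (ipX : X -> X -> R)
    (P : Y -> Y) (scal : Y) (Rs : Y -> R)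
    (phi : nat -> X) (w : nat -> R) (p nu1 nu2 : R) (c : X) (s : Y) : \bar R :=
  (Phi_p ipX phi w p c + (nu2 / 2 * `|P s - scal| ^+ 2 + nu1 * Rs s)%:E)%E.

(* (xic, xis) is in the subdifferential at (c0,s0) of a convex functional
   F : X x Y -> (-oo,+oo] (w.r.t. the product inner product); as usual the
   subdifferential is empty where F is not finite. *)
Definition in_subdiff (X Y : completeNormedModType R) (ipX : X -> X -> R)
    (ipY : Y -> Y -> R) (F : X -> Y -> \bar R) (c0 : X) (s0 : Y)
    (xic : X) (xis : Y) : Prop :=
  F c0 s0 \is a fin_num /\
  forall c s, (F c0 s0 + (ipX xic (c - c0) + ipY xis (s - s0))%:E <= F c s)%E.

Definition bregman (X Y : completeNormedModType R) (ipX : X -> X -> R)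
    (ipY : Y -> Y -> R) (F : X -> Y -> \bar R) (xic : X) (xis : Y)
    (c : X) (s : Y) (c0 : X) (s0 : Y) : \bar R :=
  (F c s - F c0 s0 - (ipX xic (c - c0) + ipY xis (s - s0))%:E)%E.

End Defs.

(* Let (ca, sa) minimize the Tikhonov functional J for data (ud, sm) with
   noise levels delta, eps, and let h = delta + eps with m h <= alpha <= M h.
   Comparing J at (ca, sa) with J at the exact solution (cs, ss) gives
   1/2|B ca sa - ud|^2 + gamma/2|sa - sm|^2 + alpha (Rtilde(ca,sa) - Rtilde(cs,ss))
     <= 1/2 delta^2 + gamma/2 eps^2.
   (1) Since alpha >= m h and h <= 1, this bounds Phi_p(ca) independently of h;
       as 1 < p <= 2 and w_i >= 1 this bounds the l^2 norm of the coefficients of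
       ca in the orthonormal basis, hence |ca - cs| <= K2.
   (2) Writing Rtilde(ca,sa) - Rtilde(cs,ss) = D + L with D the Bregman distance
       and L the pairing of the subgradient with the displacement, the source
       condition and the expansion B c s - B cs ss = B'(cs,ss)(c-cs,s-ss)
       + B(c-cs,s-ss) bound -L by |omega| times the misfits (using (1) and
       the bound C of B for the quadratic remainder).
   (3) Young's inequality absorbs these terms, giving a quadratic bound
       a^2/4 + gamma/4 b^2 + alpha D <= Q h^2, whence both rates are O(h).
   The constants depend on the a priori bound (1). *)

From HB Require Import structures.
From mathcomp Require Import all_boot all_order all_algebra.
From mathcomp Require Import all_classical all_reals all_analysis.
From mathcomp Require Import ring lra.
Set Implicit Arguments. Unset Strict Implicit. Unset Printing Implicit Defensive.
Import Order.TTheory GRing.Theory Num.Theory.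
Import numFieldNormedType.Exports.
Local Open Scope classical_set_scope.
Local Open Scope ring_scope.

Section InnerProduct.
Variables (R : realType) (X : completeNormedModType R) (ip : X -> X -> R).
Hypothesis hip : is_inner_product ip.

Lemma ipC x y : ip x y = ip y x.
Proof. by case: hip. Qed.

Lemma ipxx x : ip x x = `|x| ^+ 2.
Proof. by case: hip. Qed.

Lemma ipZDl a x y z : ip (a *: x + y) z = a * ip x z + ip y z.
Proof. by case: hip. Qed.

Lemma ipDl x y z : ip (x + y) z = ip x z + ip y z.
Proof. by rewrite -[x]scale1r ipZDl mul1r scale1r. Qed.

Lemma ip0l z : ip 0 z = 0.
Proof. by have := ipDl 0 0 z; rewrite addr0 => ?; lra. Qed.

Lemma ipZl a x z : ip (a *: x) z = a * ip x z.
Proof. by rewrite -[a *: x]addr0 ipZDl ip0l addr0. Qed.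

Lemma ipBl x y z : ip (x - y) z = ip x z - ip y z.
Proof. by rewrite ipDl -scaleN1r ipZl mulN1r. Qed.

Lemma ipDr x y z : ip z (x + y) = ip z x + ip z y.
Proof. by rewrite ipC ipDl !(ipC z). Qed.

Lemma ipZr a x z : ip z (a *: x) = a * ip z x.
Proof. by rewrite ipC ipZl ipC. Qed.

Lemma normDZ a b x y :
  `|a *: x + b *: y| ^+ 2 = a ^+ 2 * `|x| ^+ 2 + 2 * a * b * ip x y + b ^+ 2 * `|y| ^+ 2.
Proof. rewrite -ipxx ipDl !ipDr !ipZl !ipZr -!ipxx (ipC y x); ring. Qed.

(* Cauchy-Schwarz, from the nonnegativity of |(|y|) x -+ (|x|) y|^2. *)
Lemma ip_CS x y : `|ip x y| <= `|x| * `|y|.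
Proof.
have nx := normr_ge0 x; have ny := normr_ge0 y.
have hplus := normDZ `|y| `|x| x y; have hminus := normDZ `|y| (- `|x|) x y.
have pplus := sqr_ge0 `| `|y| *: x + `|x| *: y|.
have pminus := sqr_ge0 `| `|y| *: x + (- `|x|) *: y|.
have [->|x0] := eqVneq x 0; first by rewrite ip0l !normr0 mul0r.
have [->|y0] := eqVneq y 0; first by rewrite ipC ip0l !normr0 mulr0.
have xy_gt0 : 0 < 2 * (`|x| * `|y|) by rewrite !mulr_gt0 ?normr_gt0.
rewrite ler_norml; apply/andP; split; rewrite -subr_ge0.
- have : 0 <= 2 * (`|x| * `|y|) * (`|x| * `|y| + ip x y) by nra.
  by rewrite pmulr_rge0 // => ?; lra.
- have : 0 <= 2 * (`|x| * `|y|) * (`|x| * `|y| - ip x y) by nra.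
  by rewrite pmulr_rge0 // => ?; lra.
Qed.

Lemma ip_suml (F : nat -> X) m n z :
  ip (\sum_(m <= k < n) F k) z = \sum_(m <= k < n) ip (F k) z.
Proof.
elim/big_rec2: _ => [|i y1 y2 _ <-]; first exact: ip0l.
by rewrite ipDl.
Qed.

Section OrthonormalFamily.
Variable phi : nat -> X.
Hypothesis hphi : orthonormal_basis ip phi.

Let onb_ip i j : ip (phi i) (phi j) = (i == j)%:R.
Proof. by case: hphi. Qed.

Lemma onb_norm j : `|phi j| = 1.
Proof.
have := ipxx (phi j); rewrite onb_ip eqxx /= => h1.
have := normr_ge0 (phi j); nra.
Qed.

Lemma ip_partial (a : nat -> R) n j :
  ip (\sum_(0 <= k < n) a k *: phi k) (phi j) = if (j < n)%N then a j else 0.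
Proof.
elim: n => [|n IH]; first by rewrite big_geq // ip0l.
rewrite big_nat_recr //= ipDl IH ipZl onb_ip ltnS.
by case: (ltngtP j n) => [_|_|->]; rewrite ?mulr0 ?addr0 ?mulr1 ?add0r.
Qed.

Lemma norm_partial (a : nat -> R) m n : (m <= n)%N ->
  `|\sum_(m <= k < n) a k *: phi k| ^+ 2 = \sum_(m <= k < n) a k ^+ 2.
Proof.
elim: n => [|n IH]; first by rewrite leqn0 => /eqP ->; rewrite !big_geq // normr0 expr0n.
rewrite leq_eqVlt ltnS => /orP[/eqP ->|mn]; first by rewrite !big_geq // normr0 expr0n.
have orth : ip (\sum_(m <= k < n) a k *: phi k) (phi n) = 0.
  rewrite ip_suml big_nat_cond big1 // => k /andP[/andP[_ kn] _].
  by rewrite ipZl onb_ip (ltn_eqF kn) mulr0.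
have := normDZ 1 (a n) (\sum_(m <= k < n) a k *: phi k) (phi n).
rewrite scale1r -big_nat_recr //= => ->.
by rewrite big_nat_recr //= IH // orth onb_norm; ring.
Qed.

(* An expansion [sum_k a_k phi_k] with square-summable coefficients
   converges, since its partial sums are Cauchy by Pythagoras. *)
Lemma onb_series_cvg (a : nat -> R) (S : R) :
  (forall n, \sum_(0 <= i < n) a i ^+ 2 <= S) ->
  cvgn (series (fun k => a k *: phi k)).
Proof.
move=> hS.
have sq_cvg : cvgn (series (fun i => a i ^+ 2)).
  apply: nondecreasing_is_cvgn.
    apply/nondecreasing_seqP => n.
    by rewrite /series /= big_nat_recr //= lerDl sqr_ge0.
  by exists S => _ [n _ <-]; exact: hS.
have /(cauchy_seriesP _).1 sq_cauchy : cauchy (series (fun i => a i ^+ 2) @ \oo).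
  exact: cvg_cauchy.
apply/cauchy_cvgP/cauchy_seriesP => e e0.
apply: filterS (sq_cauchy (e ^+ 2) (exprn_gt0 2 e0)) => -[n1 n2] /=.
case: (leqP n1 n2) => [n12|n21]; last by move=> _; rewrite big_geq ?normr0 ?(ltnW n21).
rewrite -(norm_partial a n12) ger0_norm ?sqr_ge0 // => h.
by rewrite -(ltr_pXn2r (_ : 0 < 2)%N) ?nnegrE ?normr_ge0 ?ltW.
Qed.

Lemma onb_series_coef (a : nat -> R) j :
  cvgn (series (fun k => a k *: phi k)) ->
  ip (limn (series (fun k => a k *: phi k))) (phi j) = a j.
Proof.
set u := series _ => cvu; set v := limn u.
apply/eqP; rewrite -subr_eq0 -normr_le0; apply/ler_addgt0Pr => e e0.
have [N _ close] := (cvgrPdist_lt _ _).1 cvu e e0.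
pose n := maxn N j.+1.
have jn : (j < n)%N by rewrite leq_max ltnSn orbT.
have coef : ip (u n) (phi j) = a j by rewrite /u /series /= ip_partial jn.
have := ip_CS (v - u n) (phi j); rewrite ipBl coef onb_norm mulr1 add0r => h.
exact/ltW/(le_lt_trans h)/close/leq_maxl.
Qed.

(* Bessel-type bound: a vector whose coefficient squares have partial sums
   bounded by [S] has norm at most [sqrt S]; it is the limit of its
   expansion because the family is total. *)
Lemma onb_norm_bound (c : X) (S : R) :
  (forall n, \sum_(0 <= i < n) ip c (phi i) ^+ 2 <= S) -> `|c| <= Num.sqrt S.
Proof.
move=> hS; pose a i := ip c (phi i); pose u := series (fun k => a k *: phi k).
have S0 : 0 <= S by have := hS 0%N; rewrite big_geq.
have cvu : cvgn u := onb_series_cvg hS.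
have c_lim : c = limn u.
  apply/eqP; rewrite -subr_eq0; apply/eqP; case: hphi => _; apply => i.
  by rewrite ipBl onb_series_coef // subrr.
apply/ler_addgt0Pr => e e0.
have [N _ close] := (cvgrPdist_lt _ _).1 cvu e e0.
have partial_le : `|u N| <= Num.sqrt S.
  rewrite -[leLHS]normr_id -sqrtr_sqr ler_sqrt //.
  by rewrite /u /series /= norm_partial.
rewrite c_lim -[limn u](subrK (u N)) addrC.
apply: le_trans (ler_normD _ _) _; rewrite lerD //.
exact: ltW (close _ (leqnn N)).
Qed.

End OrthonormalFamily.
End InnerProduct.

Section SparsityPenalty.
Variables (R : realType) (X : completeNormedModType R) (ip : X -> X -> R).
Variables (phi : nat -> X) (w : nat -> R) (p : R).
Hypothesis hw : forall i, 1 <= w i.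

Let term_ge0 c i : 0 <= w i * `|ip c (phi i)| `^ p.
Proof. by rewrite mulr_ge0 ?powR_ge0 // (le_trans ler01). Qed.

Lemma Phi_partial_le c n :
  ((\sum_(0 <= i < n) w i * `|ip c (phi i)| `^ p)%:E <= Phi_p ip phi w p c)%E.
Proof.
rewrite -sumEFin /Phi_p.
have := @nneseries_lim_ge R (fun i => (w i * `|ip c (phi i)| `^ p)%:E) xpredT 0%N n.
by rewrite big_mkcond /=; apply => k _ _; rewrite lee_fin.
Qed.

Lemma Phi_ge0 c : (0 <= Phi_p ip phi w p c)%E.
Proof. by have := Phi_partial_le c 0; rewrite big_geq. Qed.

Lemma Phi_real c (y : R) :
  (Phi_p ip phi w p c + y%:E)%E \is a fin_num ->
  exists2 r, Phi_p ip phi w p c = r%:E & 0 <= r.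
Proof.
have := Phi_ge0 c; case: (Phi_p ip phi w p c) => [r| |] //= r0 _.
by exists r; rewrite -?lee_fin.
Qed.

Lemma Phi_coef_sq_bound c r : 1 < p <= 2 ->
  (Phi_p ip phi w p c <= r%:E)%E ->
  forall n, \sum_(0 <= i < n) ip c (phi i) ^+ 2 <= (1 + r) * r.
Proof.
move=> /andP[p1 p2] hr; pose t i := w i * `|ip c (phi i)| `^ p.
have tsum n : \sum_(0 <= i < n) t i <= r.
  by rewrite -lee_fin (le_trans (Phi_partial_le c n)).
have r0 : 0 <= r by have := tsum 0%N; rewrite big_geq.
have coef_le i : ip c (phi i) ^+ 2 <= (1 + r) * t i.
  set z := `|ip c (phi i)|; have z0 : 0 <= z := normr_ge0 _.
  have -> : ip c (phi i) ^+ 2 = z ^+ 2 by rewrite real_normK ?num_real.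
  have zp_t : z `^ p <= t i by rewrite /t -/z ler_peMl ?powR_ge0.
  have t_r : t i <= r.
    apply: le_trans (tsum i.+1); rewrite big_nat_recr //= lerDr.
    by apply: sumr_ge0 => k _; exact: term_ge0.
  have := powR_ge0 z p; case: (lerP z 1) => z1 zp0.
  - have : z ^+ 2 <= z `^ p.
      have [->|zn0] := eqVneq z 0; first by rewrite expr0n powR_ge0.
      rewrite -powR_mulrn //; apply: ger_powR; last exact: p2.
      by rewrite lt_def zn0 z0 z1.
    nra.
  - have : z <= z `^ p by rewrite -{1}(powRr1 z0) ler_powR ?ltW.
    nra.
move=> n; apply: le_trans (_ : \sum_(0 <= i < n) (1 + r) * t i <= _).
  exact: ler_sum_nat.
by rewrite -mulr_sumr ler_wpM2l ?addr_ge0.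
Qed.

End SparsityPenalty.

Section TikhonovFunctional.
Variables (R : realType) (X Y Z : completeNormedModType R) (ipX : X -> X -> R).
Variables (B : X -> Y -> Z) (gamma : R) (P : Y -> Y) (scal : Y) (Rs : Y -> R).
Variables (phi : nat -> X) (w : nat -> R) (p nu1 nu2 : R).
Hypothesis hw : forall i, 1 <= w i.

Definition s_penalty (s : Y) : R := nu2 / 2 * `|P s - scal| ^+ 2 + nu1 * Rs s.

Lemma s_penalty_ge0 s : 0 < nu1 -> 0 < nu2 -> 0 <= Rs s -> 0 <= s_penalty s.
Proof.
by move=> nu1_0 nu2_0 Rs0; have := sqr_ge0 `|P s - scal|; rewrite /s_penalty; nra.
Qed.

Lemma Rtilde_split c s :
  Rtilde ipX P scal Rs phi w p nu1 nu2 c s = (Phi_p ipX phi w p c + (s_penalty s)%:E)%E.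
Proof. by []. Qed.

Lemma Jfun_le_real u sm alpha c s c0 s0 r0 :
  0 < alpha -> Phi_p ipX phi w p c0 = r0%:E ->
  (Jfun ipX B gamma P scal Rs phi w p u sm alpha (nu1 * alpha) (nu2 * alpha) c s
   <= Jfun ipX B gamma P scal Rs phi w p u sm alpha (nu1 * alpha) (nu2 * alpha) c0 s0)%E ->
  exists2 r, Phi_p ipX phi w p c = r%:E &
    2^-1 * `|B c s - u| ^+ 2 + gamma / 2 * `|s - sm| ^+ 2 + alpha * (r + s_penalty s)
    <= 2^-1 * `|B c0 s0 - u| ^+ 2 + gamma / 2 * `|s0 - sm| ^+ 2 + alpha * (r0 + s_penalty s0).
Proof.
rewrite /Jfun /s_penalty => a0 ->.
have := Phi_ge0 ipX phi p hw c; case: (Phi_p ipX phi w p c) => [r| |] //= _.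
- rewrite -!EFinM -!EFinD lee_fin => hJ; exists r => //; lra.
- by rewrite mulry gtr0_sg // mul1e addey.
Qed.

End TikhonovFunctional.

Lemma dist_le_shift (R : realType) (V : normedModType R) (x y z : V) (delta : R) :
  `|y - z| <= delta -> `|x - y| <= `|x - z| + delta.
Proof.
by move=> hyz; apply: le_trans (ler_distD z _ _) _; rewrite [`|z - _|]distrC lerD2l.
Qed.

Section Bilinear.
Variables (R : realType) (X Y Z : completeNormedModType R) (B : X -> Y -> Z).
Hypothesis hB : bilinear_map B.

Lemma bilinearBl c1 c2 s : B (c1 - c2) s = B c1 s - B c2 s.
Proof. by have := hB.1 (-1) c2 c1 s; rewrite scaleN1r addrC => ->; rewrite scaleN1r addrC. Qed.

Lemma bilinearBr c s1 s2 : B c (s1 - s2) = B c s1 - B c s2.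
Proof. by have := hB.2 (-1) c s2 s1; rewrite scaleN1r addrC => ->; rewrite scaleN1r addrC. Qed.

(* Taylor expansion of a bilinear map at [(c0, s0)]: the derivative
   [B'(c0,s0)(x,y) = B c0 y + B x s0] plus the exact quadratic remainder. *)
Lemma bilinear_expand c s c0 s0 :
  B c s - B c0 s0 = (B (c - c0) s0 + B c0 (s - s0)) + B (c - c0) (s - s0).
Proof.
rewrite !bilinearBl !bilinearBr.
by rewrite [B c s - _ - _]addrC addrA addrK addrC addrA subrK.
Qed.

End Bilinear.

Section SourceCondition.
Variables (R : realType) (X Y Z : completeNormedModType R).
Variables (ipX : X -> X -> R) (ipY : Y -> Y -> R) (ipZ : Z -> Z -> R).
Hypothesis hZ : is_inner_product ipZ.
Variables (B : X -> Y -> Z) (C : R).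
Hypotheses (hB : bilinear_map B) (hBC : forall c s, `|B c s| <= C * `|c| * `|s|).
Variables (cs : X) (ss : Y) (omega : Z) (xic : X) (xis : Y).
Hypotheses (hsrc_c : forall x, ipX xic x = ipZ omega (B x ss))
           (hsrc_s : forall y, ipY xis y = ipZ omega (B cs y)).

Lemma source_pairing c s :
  ipX xic (c - cs) + ipY xis (s - ss) =
  ipZ omega (B c s - B cs ss) - ipZ omega (B (c - cs) (s - ss)).
Proof.
by rewrite hsrc_c hsrc_s (bilinear_expand hB c s cs ss) ipDr // addrK ipDr.
Qed.

Lemma source_lower_bound c s :
  - (ipX xic (c - cs) + ipY xis (s - ss)) <=
  `|omega| * `|B c s - B cs ss| + `|omega| * (C * `|c - cs| * `|s - ss|).
Proof.
rewrite source_pairing opprB addrC lerD //.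
- apply: le_trans (ler_norm _) _; rewrite normrN; exact: ip_CS.
- apply: le_trans (ler_norm _) (le_trans (ip_CS hZ _ _) _).
  by rewrite ler_wpM2l.
Qed.

Lemma source_misfit_bound c s (ud : Z) (sm : Y) (delta eps rc : R) :
  0 <= C -> `|c - cs| <= rc -> `|B cs ss - ud| <= delta -> `|ss - sm| <= eps ->
  - (ipX xic (c - cs) + ipY xis (s - ss)) <=
  `|omega| * (`|B c s - ud| + delta) + `|omega| * (C * rc) * (`|s - sm| + eps).
Proof.
move=> C0 hc hud hsm.
have hBd := dist_le_shift (B c s) hud.
have hs := dist_le_shift s hsm.
have hprod : C * `|c - cs| * `|s - ss| <= C * rc * (`|s - sm| + eps).
  by rewrite -!mulrA ler_wpM2l // ler_pM.
have o0 := normr_ge0 omega.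
apply: le_trans (source_lower_bound c s) _; apply: lerD; first exact: ler_wpM2l.
by rewrite -[X in _ <= X]mulrA ler_wpM2l.
Qed.

End SourceCondition.

Section RealEstimates.
Variable R : realFieldType.

Lemma minimizer_penalty_bound (gamma m h alpha a b d e x g r0 : R) :
  0 < gamma -> 0 < m -> 0 < h <= 1 -> 0 <= d <= h -> 0 <= e <= h ->
  m * h <= alpha -> 0 <= g ->
  2^-1 * a ^+ 2 + gamma / 2 * b ^+ 2 + alpha * (x + g)
    <= 2^-1 * d ^+ 2 + gamma / 2 * e ^+ 2 + alpha * r0 ->
  x <= r0 + (1 + gamma) / (2 * m).
Proof.
move=> g0 m0 /andP[h0 h1] /andP[d0 dh] /andP[e0 eh] mha g_ge0 hJ.
have a0 : 0 < alpha by apply: lt_le_trans mha; rewrite mulr_gt0.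
have misfit : 2^-1 * d ^+ 2 + gamma / 2 * e ^+ 2 <= (1 + gamma) / 2 * h.
  have d_sq : d ^+ 2 <= h by nra.
  have e_sq : e ^+ 2 <= h by nra.
  nra.
have scaled : (1 + gamma) / 2 * h <= alpha * ((1 + gamma) / (2 * m)).
  have -> : (1 + gamma) / 2 * h = m * h * ((1 + gamma) / (2 * m)).
    by field; rewrite gt_eqF.
  by rewrite ler_wpM2r // divr_ge0 ?mulr_ge0 ?addr_ge0 // ltW.
rewrite -(ler_pM2l a0) mulrDr.
have := sqr_ge0 a; have := sqr_ge0 b; nra.
Qed.

Definition rate_const (gamma M u k : R) : R :=
  2^-1 + gamma / 2 + M ^+ 2 * u ^+ 2 + M * u + M ^+ 2 * u ^+ 2 * k ^+ 2 / gamma + M * u * k.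

(* Core variational estimate: a Tikhonov-type inequality whose linear
   term [L] is bounded below by the misfits [a], [b] is turned, by Young's
   inequality and [alpha <= M h], into a quadratic bound in [h]. *)
Lemma variational_estimate (gamma M h alpha u k a b d e delta eps D L : R) :
  0 < gamma -> 0 <= alpha <= M * h -> 0 <= u -> 0 <= k -> 0 <= a -> 0 <= b ->
  0 <= d <= delta -> delta <= h -> 0 <= e <= eps -> eps <= h ->
  2^-1 * a ^+ 2 + gamma / 2 * b ^+ 2 + alpha * (D + L)
    <= 2^-1 * d ^+ 2 + gamma / 2 * e ^+ 2 ->
  - L <= u * (a + delta) + u * k * (b + eps) ->
  a ^+ 2 / 4 + gamma / 4 * b ^+ 2 + alpha * D <= rate_const gamma M u k * h ^+ 2.
Proof.
move=> g0 /andP[a0 aM] u0 k0 a_ge0 b_ge0 /andP[d0 dd] dh /andP[e0 ee] eh hJ hL.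
have delta0 : 0 <= delta := le_trans d0 dd.
have eps0 : 0 <= eps := le_trans e0 ee.
have h0 : 0 <= h := le_trans delta0 dh.
have hLa : alpha * - L <= alpha * (u * (a + delta) + u * k * (b + eps)).
  exact: ler_wpM2l.
have young_a : alpha * u * a <= a ^+ 2 / 4 + (alpha * u) ^+ 2.
  have := sqr_ge0 (a / 2 - alpha * u).
  have -> : (a / 2 - alpha * u) ^+ 2 = a ^+ 2 / 4 + (alpha * u) ^+ 2 - alpha * u * a.
    by field.
  lra.
have young_b : alpha * u * k * b <= gamma / 4 * b ^+ 2 + (alpha * u * k) ^+ 2 / gamma.
  have := sqr_ge0 (gamma * b / 2 - alpha * u * k).
  have -> : (gamma * b / 2 - alpha * u * k) ^+ 2 =
      gamma * (gamma / 4 * b ^+ 2 + (alpha * u * k) ^+ 2 / gamma - alpha * u * k * b).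
    by field; rewrite gt_eqF.
  by rewrite pmulr_rge0 // subr_ge0.
have data : 2^-1 * d ^+ 2 + gamma / 2 * e ^+ 2 <= 2^-1 * h ^+ 2 + gamma / 2 * h ^+ 2.
  have : d ^+ 2 <= h ^+ 2 by rewrite ler_pXn2r ?nnegrE // (le_trans dd).
  have : e ^+ 2 <= h ^+ 2 by rewrite ler_pXn2r ?nnegrE // (le_trans ee).
  nra.
have au : alpha * u <= M * h * u by rewrite ler_wpM2r.
have au0 : 0 <= alpha * u by rewrite mulr_ge0.
have cross : alpha * u * delta + alpha * u * k * eps <= (M * u + M * u * k) * h ^+ 2.
  have : alpha * u * delta <= M * h * u * h by rewrite ler_pM.
  have : alpha * u * k * eps <= M * h * u * k * h.
    by rewrite ler_pM ?mulr_ge0 ?ler_wpM2r.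
  nra.
have squares : (alpha * u) ^+ 2 + (alpha * u * k) ^+ 2 / gamma
    <= (M ^+ 2 * u ^+ 2 + M ^+ 2 * u ^+ 2 * k ^+ 2 / gamma) * h ^+ 2.
  have sq : (alpha * u) ^+ 2 <= (M * h * u) ^+ 2.
    by rewrite ler_pXn2r ?nnegrE // mulr_ge0 // (le_trans a0 aM).
  have kg : 0 <= k ^+ 2 / gamma by rewrite divr_ge0 ?sqr_ge0 // ltW.
  have : (alpha * u) ^+ 2 * (k ^+ 2 / gamma) <= (M * h * u) ^+ 2 * (k ^+ 2 / gamma).
    exact: ler_wpM2r.
  have -> : (M ^+ 2 * u ^+ 2 + M ^+ 2 * u ^+ 2 * k ^+ 2 / gamma) * h ^+ 2 =
    (M * h * u) ^+ 2 + (M * h * u) ^+ 2 * (k ^+ 2 / gamma) by field; rewrite gt_eqF.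
  lra.
rewrite /rate_const; lra.
Qed.

Lemma linear_rates (gamma m h alpha Q a b D : R) :
  0 < gamma -> 0 < m -> 0 < h -> m * h <= alpha -> 0 <= a -> 0 <= D ->
  a ^+ 2 / 4 + gamma / 4 * b ^+ 2 + alpha * D <= Q * h ^+ 2 ->
  a <= (1 + 4 * Q) * h /\ D <= Q / m * h.
Proof.
move=> g0 m0 h0 mha a0 D0 hQ.
have mh0 : 0 < m * h by rewrite mulr_gt0.
have alphaD : m * h * D <= alpha * D by rewrite ler_wpM2r.
have b_term : 0 <= gamma / 4 * b ^+ 2 by rewrite mulr_ge0 ?sqr_ge0 // divr_ge0 // ltW.
have a_sq : a ^+ 2 <= 4 * Q * h ^+ 2 by nra.
have Q0 : 0 <= Q.
  by rewrite -(pmulr_lge0 _ (exprn_gt0 2 h0)); nra.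
split.
- have bound0 : 0 <= (1 + 4 * Q) * h by rewrite mulr_ge0 ?addr_ge0 ?mulr_ge0 // ltW.
  rewrite -(ler_pXn2r (_ : 0 < 2)%N) ?nnegrE //.
  by apply: le_trans a_sq _; nra.
- rewrite -(ler_pM2l mh0).
  have -> : m * h * (Q / m * h) = Q * h ^+ 2 by field; rewrite gt_eqF.
  nra.
Qed.

End RealEstimates.

Theorem mainTheorem9 (R : realType)
  (X Y Z : completeNormedModType R)
  (ipX : X -> X -> R) (ipY : Y -> Y -> R) (ipZ : Z -> Z -> R)
  (hX : is_inner_product ipX) (hY : is_inner_product ipY) (hZ : is_inner_product ipZ)
  (B : X -> Y -> Z) (C : R)
  (hB : bilinear_map B) (hC : 0 < C)
  (hBC : forall c s, `|B c s| <= C * `|c| * `|s|)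
  (hBw : seq_weak_weak_continuous ipX ipY ipZ B)
  (Yn : set Y) (P : Y -> Y) (scal : Y)
  (hYn : findim_subspace Yn) (hPlin : linear_map P) (hPbd : bounded_map P)
  (hPrange : forall y, Yn (P y)) (hscal : Yn scal)
  (Rs : Y -> R) (hRs0 : forall y, 0 <= Rs y) (hRsc : convex_fun Rs)
  (hRslsc : weakly_lsc ipY Rs)
  (phi : nat -> X) (hphi : orthonormal_basis ipX phi)
  (w : nat -> R) (hw : forall i, 1 <= w i)
  (p gamma nu1 nu2 : R) (hp : 1 < p <= 2) (hgamma : 0 < gamma)
  (hnu1 : 0 < nu1) (hnu2 : 0 < nu2)
  (cs : X) (ss : Y)
  (hmin : forall c, B c ss = B cs ss ->
     (Phi_p ipX phi w p cs <= Phi_p ipX phi w p c)%E)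
  (omega : Z) (xic : X) (xis : Y)
  (hxi : in_subdiff ipX ipY (Rtilde ipX P scal Rs phi w p nu1 nu2) cs ss xic xis)
  (hsrc_c : forall x, ipX xic x = ipZ omega (B x ss))
  (hsrc_s : forall y, ipY xis y = ipZ omega (B cs y))
  (alpha_max : R) (halpha_max : 0 < alpha_max)
  (hsmall : C * `|omega| < Num.min 1 (gamma / (2 * alpha_max)))
  (m M : R) (hm : 0 < m) (hmM : m <= M) :
  exists K : R, exists2 eta : R, 0 < eta &
    forall (delta eps : R) (udelta : Z) (smod : Y) (alpha : R) (ca : X) (sa : Y),
      0 <= delta -> 0 <= eps -> delta + eps < eta ->
      `|B cs ss - udelta| <= delta -> `|ss - smod| <= eps ->
      0 < alpha -> alpha <= alpha_max ->
      m * (delta + eps) <= alpha <= M * (delta + eps) ->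
      (forall c s, (Jfun ipX B gamma P scal Rs phi w p udelta smod
                      alpha (nu1 * alpha) (nu2 * alpha) ca sa
                    <= Jfun ipX B gamma P scal Rs phi w p udelta smod
                      alpha (nu1 * alpha) (nu2 * alpha) c s)%E) ->
      `|B ca sa - B cs ss| <= K * (delta + eps) /\
      (bregman ipX ipY (Rtilde ipX P scal Rs phi w p nu1 nu2) xic xis ca sa cs ss
         <= (K * (delta + eps))%:E)%E.
Proof.
case: hxi => hfin hsub.
have [phis Hphis _] := Phi_real hw hfin.
pose Gs := s_penalty P scal Rs nu1 nu2.
pose r1 := phis + Gs ss + (1 + gamma) / (2 * m).
pose K2 := Num.sqrt ((1 + r1) * r1) + `|cs|.
pose Q := rate_const gamma M `|omega| (C * K2).
exists (2 + 4 * Q + Q / m); exists 1 => // delta eps ud sm alpha ca sa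
  d0 e0 h1 hud hsm a0 _ /andP[am aM] hJ.
set h := delta + eps in h1 am aM *.
have [dh eh] : delta <= h /\ eps <= h by rewrite /h; split; lra.
have h0 : 0 < h by rewrite -(pmulr_rgt0 _ (lt_le_trans hm hmM)) (lt_le_trans a0 aM).
have [phia Hphia JA] := Jfun_le_real hw a0 Hphis (hJ cs ss).
have phia_le : phia <= r1.
  apply: (minimizer_penalty_bound (h := h) hgamma hm _ _ _ am _ JA).
  - by rewrite h0; lra.
  - by rewrite normr_ge0 (le_trans hud).
  - by rewrite normr_ge0 (le_trans hsm).
  - exact: s_penalty_ge0.
have ca_near : `|ca - cs| <= K2.
  apply: le_trans (ler_normB _ _) _; rewrite lerD2r.
  apply: (onb_norm_bound hX hphi); apply: (Phi_coef_sq_bound hw hp).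
  by rewrite Hphia lee_fin.
have hL := source_misfit_bound hZ hB hBC hsrc_c hsrc_s sa (ltW hC) ca_near hud hsm.
set L := ipX xic (ca - cs) + ipY xis (sa - ss) in hL hsub.
pose D := phia + Gs sa - (phis + Gs ss) - L.
have hQ : `|B ca sa - ud| ^+ 2 / 4 + gamma / 4 * `|sa - sm| ^+ 2 + alpha * D <= Q * h ^+ 2.
  apply: (variational_estimate (M := M) (h := h) (D := D)
    (d := `|B cs ss - ud|) (e := `|ss - sm|) hgamma _ _ _ _ _ _ _ _ _ _ hL).
  - by rewrite (ltW a0) aM.
  - exact: normr_ge0.
  - by rewrite mulr_ge0 ?addr_ge0 ?sqrtr_ge0 ?normr_ge0 // (ltW hC).
  - exact: normr_ge0.
  - exact: normr_ge0.
  - by rewrite normr_ge0 hud.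
  - exact: dh.
  - by rewrite normr_ge0 hsm.
  - exact: eh.
  - by rewrite /D /Gs; lra.
have D0 : 0 <= D.
  have := hsub ca sa; rewrite !Rtilde_split Hphis Hphia -!EFinD lee_fin /D /Gs -/L; lra.
have [ha hD] := linear_rates hgamma hm h0 am (normr_ge0 _) D0 hQ.
split.
- apply: le_trans (dist_le_shift _ hud) _; lra.
- rewrite /bregman !Rtilde_split Hphis Hphia -!EFinD lee_fin -/L -/D.
  by have := normr_ge0 (B ca sa - ud); lra.
Qed.
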